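(* Let $r\in\mathbb N$ and let $(g_n)_{n\in\mathbb N}$ be a sequence in $\mathcal L_r$ whose supports are all contained in a common well-ordered set $W\subseteq\mathbb R_{\ge0}\times\mathbb Z^r$ with $\min W>\mathbf 0_{r+1}$, and let $g_0\in\mathcal L_r$. Let $\varphi\in\mathcal L_r^0$. Then $g_n\to g_0$ as $n\to\infty$ in the weak topology of $\mathcal L_r$ if and only if $g_n\circ\varphi\to g_0\circ\varphi$ as $n\to\infty$ in the weak topology of $\mathcal L_r$.
   Context: $z$ infinitesimal; $\boldsymbol\ell_1:=-1/\ln z$, $\boldsymbol\ell_{j+1}:=\boldsymbol\ell_j\circ\boldsymbol\ell_1$. $\mathcal L_r$: formal sums $\sum a_{\alpha,n_1,\dots,n_r}z^\alpha\boldsymbol\ell_1^{n_1}\cdots\boldsymbol\ell_r^{n_r}$, real coefficients, well-ordered support in $\mathbb R_{\ge0}\times\mathbb Z^r$ (lexicographic order). $\mathcal L_r^0$: elements with leading term $z$ (a group under composition of transseries). Weak topology: $(\varphi_n)\to\varphi$ iff for each $(\alpha,n_1,\dots,n_r)$ the coefficient of $z^\alpha\boldsymbol\ell_1^{n_1}\cdots\boldsymbol\ell_r^{n_r}$ in $\varphi_n$ converges in $\mathbb R$ to the corresponding coefficient of $\varphi$. *)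

From HB Require Import structures.
From mathcomp Require Import all_boot all_order all_algebra.
From mathcomp Require Import all_classical all_reals all_analysis.
Set Implicit Arguments. Unset Strict Implicit. Unset Printing Implicit Defensive.
Import Order.TTheory GRing.Theory Num.Theory.
Import numFieldNormedType.Exports.
Local Open Scope classical_set_scope.
Local Open Scope ring_scope.

(* Logarithmic transseries in L_r, represented by their coefficient functions.
   A monomial z^alpha l_1^{n_1} ... l_r^{n_r} is encoded by its exponent
   (alpha, n) : R * 'rV[int]_r, where n ord0 i is the exponent of l_{i+1}.
   Multiplication of monomials is addition of exponents. *)

Section Transseries.
Variables (R : realType) (r : nat).

Definition mon := (R * 'rV[int]_r)%type.
Definition ser := mon -> R.

Definition lsupp (f : ser) : set mon := [set m | f m != 0].

Definition lexltv (n k : 'rV[int]_r) : Prop :=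
  exists i : 'I_r, (forall j : 'I_r, (j < i)%N -> n ord0 j = k ord0 j)
                   /\ n ord0 i < k ord0 i.
Definition lexlt (a b : mon) : Prop :=
  a.1 < b.1 \/ (a.1 = b.1 /\ lexltv a.2 b.2).
Definition lexle (a b : mon) : Prop := lexlt a b \/ a = b.

Definition lex_wellordered (S : set mon) : Prop :=
  forall A : set mon, A `<=` S -> A !=set0 ->
    exists2 a, A a & forall b, A b -> lexle a b.

Definition inL (f : ser) : Prop :=
  lex_wellordered (lsupp f) /\ lsupp f `<=` [set m | 0 <= m.1].

Definition zmon : mon := (1, 0).

Definition inL0 (phi : ser) : Prop :=
  inL phi /\ phi zmon = 1 /\ forall m, lsupp phi m -> lexle zmon m.

Definition one : ser := fun m => (m == 0)%:R.
(* multiplication by the monomial m0 *)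
Definition shift (m0 : mon) (f : ser) : ser := fun m => f (m - m0).
Definition mul (f g : ser) : ser :=
  fun m => \sum_(m1 \in [set: mon]) f m1 * g (m - m1).
Definition pow (f : ser) (k : nat) : ser := iter k (mul f) one.
(* formal power series sum_k c_k d^k (d infinitesimal), summed coefficientwise *)
Definition powser (c : nat -> R) (d : ser) : ser :=
  fun m => \sum_(k \in [set: nat]) c k * pow d k m.

Definition binr (a : R) (k : nat) : R :=
  (\prod_(i < k) (a - i%:R)) / k`!%:R.
(* coefficients of log(1+x) *)
Definition logc (k : nat) : R := if k == 0%N then 0 else (-1) ^+ k.+1 / k%:R.
(* coefficients of x/(1-x) = sum_{k>=1} x^k *)
Definition geoc (k : nat) : R := if k == 0%N then 0 else 1.

(* the monomial l_{j+1} (for j < r) *)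
Definition ellmon (j : nat) : mon := (0, \row_(i < r) ((i : nat) == j)%:Z).
Definition ell (j : nat) : ser := fun m => (m == ellmon j)%:R.

(* For phi = z (1 + eps) in L_r^0:
     delta 0 = eps,
     l_{j+1} o phi = l_{j+1} (1 + delta (j+1)),
   where delta (j+1) = sum_{k>=1} (l_{j+1} log(1 + delta j))^k, since
   l_{j+1} o phi = -1/log(l_j o phi) = -1/(-1/l_{j+1} + log(1 + delta j))
   (with l_0 o phi = phi). *)
Definition eps (phi : ser) : ser := fun m => phi (m + zmon) - one m.
Fixpoint delta (phi : ser) (j : nat) : ser :=
  match j with
  | 0 => eps phi
  | j'.+1 => powser geoc (mul (ell j') (powser logc (delta phi j')))
  end.

(* (z^alpha l_1^{n_1} ... l_r^{n_r}) o phi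
     = z^alpha l^n * (1+eps)^alpha * prod_i (1 + delta (i+1))^{n_i}  *)
Definition unitfac (phi : ser) (m : mon) : ser :=
  mul (powser (binr m.1) (eps phi))
      (\big[mul/one]_(i < r) powser (binr (m.2 ord0 i)%:~R) (delta phi i.+1)).

(* composition g o phi = sum_m g_m (monomial m) o phi, summed coefficientwise *)
Definition compose (g phi : ser) : ser :=
  fun m => \sum_(m0 \in [set: mon]) g m0 * shift m0 (unitfac phi m0) m.

(* convergence in the weak topology: coefficientwise convergence *)
Definition weak_cvg (gs : nat -> ser) (g : ser) : Prop :=
  forall m : mon, (fun n => gs n m) @ \oo --> g m.

End Transseries.

From Pilot Require Import Defs.
From HB Require Import structures.
From mathcomp Require Import all_boot all_order all_algebra.
From mathcomp Require Import finmap.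
From mathcomp Require Import all_classical all_reals all_analysis.
Import Order.TTheory GRing.Theory Num.Theory.
Import numFieldNormedType.Exports.
Local Open Scope classical_set_scope.
Local Open Scope ring_scope.
Set Implicit Arguments. Unset Strict Implicit. Unset Printing Implicit Defensive.

(* Write phi = z (1 + eps).  Composition with phi sends each monomial
   z^alpha l^n to z^alpha l^n * u_(alpha,n), where the unit factor
   u_(alpha,n) = (1 + eps)^alpha prod_i (1 + delta_i)^(n_i) has constant
   term 1 and all its exponents in the additive monoid T generated by the
   positive exponents of eps and of l_1, ..., l_r.  By Neumann's lemma T is
   well-ordered, and then every monomial m has only finitely many
   decompositions m = a + t with a in A := W u supp g0 and t in T.  Hence
   (h o phi)_m is a finite linear combination of the coefficients h_a,
   a in A, a <= m, with the coefficient of h_m equal to 1.  Finite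
   combinations preserve coefficientwise limits, which gives one direction;
   the triangular shape lets us solve for h_m and conclude the converse by
   well-founded induction along A. *)

Section LexOrder.
Variables (R : realType) (r : nat).
Implicit Types (u v w : 'rV[int]_r) (a b c : mon R r).

Lemma lexltv_irr u : ~ lexltv u u.
Proof. by case=> i [_]; rewrite ltxx. Qed.

Lemma lexltv_trans u v w : lexltv u v -> lexltv v w -> lexltv u w.
Proof.
move=> [i [eq_i lt_i]] [j [eq_j lt_j]].
have [ij|ji|/val_inj ij] := ltngtP i j.
- exists i; split; last by rewrite -(eq_j _ ij).
  by move=> k ki; rewrite eq_i // eq_j // (ltn_trans ki ij).
- exists j; split; last by rewrite (eq_i _ ji).
  by move=> k kj; rewrite eq_i ?eq_j // (ltn_trans kj ji).
- subst j; exists i; split; last exact: lt_trans lt_i lt_j.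
  by move=> k ki; rewrite eq_i ?eq_j.
Qed.

(* Two distinct rows are compared at the first index where they differ. *)
Lemma lexltv_total u v : u = v \/ lexltv u v \/ lexltv v u.
Proof.
have [[j0 neq_j0]|same] := pselect (exists j : 'I_r, u ord0 j != v ord0 j);
  last by left; apply/rowP => j; apply/eqP; apply: contra_notT same; exists j.
right; case: (@arg_minnP _ j0 (fun i => u ord0 i != v ord0 i) val neq_j0).
move=> i neq_i imin.
have eq_below (k : 'I_r) : (k < i)%N -> u ord0 k = v ord0 k.
  by move=> ki; apply/eqP; apply: contraTT ki => /imin; rewrite -leqNgt.
have [lt_i|gt_i|eq_i] := ltgtP (u ord0 i) (v ord0 i).
- by left; exists i.
- by right; exists i; split=> // k /eq_below ->.
- by rewrite eq_i eqxx in neq_i.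
Qed.

Lemma lexltv_addr u v w : lexltv u v -> lexltv (u + w) (v + w).
Proof.
move=> [i [eq_i lt_i]]; exists i; split=> [k ki|]; rewrite !mxE.
  by rewrite eq_i.
by rewrite ltrD2r.
Qed.

Lemma lexlt_irr a : ~ lexlt a a.
Proof. by case; [rewrite ltxx | case=> _ /lexltv_irr]. Qed.

Lemma lexlt_trans a b c : lexlt a b -> lexlt b c -> lexlt a c.
Proof.
case=> [lt1|[eq1 lt1]] [lt2|[eq2 lt2]].
- by left; apply: lt_trans lt1 lt2.
- by left; rewrite -eq2.
- by left; rewrite eq1.
- by right; split; [rewrite eq1 | apply: lexltv_trans lt1 lt2].
Qed.

Lemma lexlt_total a b : a = b \/ lexlt a b \/ lexlt b a.
Proof.
case: a b => [a1 a2] [b1 b2]; have [lt1|gt1|->] := ltgtP a1 b1.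
- by right; left; left.
- by right; right; left.
- have [->|[lt2|gt2]] := lexltv_total a2 b2; first by left.
  + by right; left; right.
  + by right; right; right.
Qed.

Lemma lexlt_addr a b c : lexlt a b -> lexlt (a + c) (b + c).
Proof.
case: a b c => [a1 a2] [b1 b2] [c1 c2] [/= lt1|[/= eq1 lt2]].
  by left; rewrite /= ltrD2r.
by right; split; [rewrite /= eq1 | apply: lexltv_addr].
Qed.

Lemma lexle_total a b : lexle a b \/ lexlt b a.
Proof. by have [->|[]] := lexlt_total a b; [left; right | left; left | right]. Qed.

Lemma lexle_trans a b c : lexle a b -> lexle b c -> lexle a c.
Proof.
by case=> [lt1|<-] [lt2|<-]; [left; apply: lexlt_trans lt1 lt2 | left | left | right].
Qed.

Lemma lexlt_le_trans a b c : lexlt a b -> lexle b c -> lexlt a c.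
Proof. by move=> lt1 [lt2|<-] //; apply: lexlt_trans lt1 lt2. Qed.

Lemma lexle_lt_trans a b c : lexle a b -> lexlt b c -> lexlt a c.
Proof. by case=> [lt1|<-] lt2 //; apply: lexlt_trans lt1 lt2. Qed.

Lemma lexlt_nle a b : lexlt a b -> ~ lexle b a.
Proof. by move=> lt1 /(lexlt_le_trans lt1) /lexlt_irr. Qed.

Lemma lexle_antisym a b : lexle a b -> lexle b a -> a = b.
Proof. by case=> // /lexlt_nle. Qed.

Lemma lexle_addr a b c : lexle a b -> lexle (a + c) (b + c).
Proof. by case=> [lt1|<-]; [left; apply: lexlt_addr | right]. Qed.

Lemma lexlt_subr a b : lexlt a b <-> lexlt 0 (b - a).
Proof.
split=> [|/(lexlt_addr a)]; last by rewrite add0r subrK.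
by move/(lexlt_addr (- a)); rewrite subrr.
Qed.

Lemma lexle_add0 a b : lexle 0 a -> lexle 0 b -> lexle 0 (a + b).
Proof. by move=> a0 /(lexle_addr a); rewrite add0r addrC; apply: lexle_trans. Qed.

Lemma lexlt_add_cancel a a' b b' : lexle a a' -> lexlt (a' + b') (a + b) -> lexlt b' b.
Proof.
move=> /(lexle_addr b') le_a /(lexle_lt_trans le_a) /(lexlt_addr (- a)).
by rewrite ![a + _]addrC !addrK.
Qed.

End LexOrder.

Lemma infinite_injseq (T : Type) (F : set T) :
  infinite_set F -> exists2 u : nat -> T, (forall n, F (u n)) & injective u.
Proof.
elim/Ppointed: T => T in F *; first by rewrite emptyE => /(_ (finite_set0 _)).
move=> /infiniteP /pcard_leP /injfunPex [u uF uinj].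
exists u => [n|i j eq_u]; first exact: uF.
by apply: uinj; rewrite ?inE.
Qed.

Section WellOrdered.
Variables (R : realType) (r : nat).
Local Notation mon := (mon R r).
Local Notation WO := (@lex_wellordered R r).
Implicit Types (A B S : set mon) (x : nat -> mon).

Definition descending x := forall n, lexlt (x n.+1) (x n).

Lemma descending_lt x : descending x -> forall i j, (i < j)%N -> lexlt (x j) (x i).
Proof.
move=> dx i; elim=> // j IH; rewrite ltnS leq_eqVlt => /orP[/eqP->|ij]; first exact: dx.
exact: lexlt_trans (dx j) (IH ij).
Qed.

Lemma wellorderedP S :
  WO S <-> forall x, (forall n, S (x n)) -> ~ descending x.
Proof.
split=> [woS x Sx dx|nodesc A AS [a0 Aa0]].
  have [_ [n _ <-] xmin] : exists2 a, range x a & forall b, range x b -> lexle a b.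
    by apply: woS; [move=> _ [n _ <-] | exists (x 0%N), 0%N].
  by apply: lexlt_nle (dx n) (xmin _ _); exists n.+1.
apply: contrapT => nomin.
have smaller a : exists b, A a -> A b /\ lexlt b a.
  have [Aa|] := pselect (A a); last by exists a.
  have /existsNP [b /not_implyP [Ab nab]] : ~ forall b, A b -> lexle a b.
    by move=> amin; apply: nomin; exists a.
  by exists b => _; case: (lexle_total a b).
have [f fP] := choice smaller.
have Aiter n : A (iter n f a0) by elim: n => //= n /fP [].
apply: (nodesc (fun n => iter n f a0)) => n; first exact: AS.
by case: (fP _ (Aiter n)).
Qed.

Lemma wo_sub A B : A `<=` B -> WO B -> WO A.
Proof. by move=> AB woB C CA; apply: woB; apply: subset_trans AB. Qed.

Lemma wo_set1 a : WO [set a].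
Proof.
by move=> C Ca [c Cc]; exists c => // y Cy; rewrite (Ca _ Cc) (Ca _ Cy); right.
Qed.

(* The minimum of C is the minimum of its A-part, unless some element of C
   lies below it; all such elements are in B and have a minimum there. *)
Lemma wo_setU A B : WO A -> WO B -> WO (A `|` B).
Proof.
move=> woA woB C CAB C0.
have [CA0|CA0] := pselect ((C `&` A) !=set0); last first.
  apply: woB => // y Cy; case: (CAB _ Cy) => // Ay.
  by exfalso; apply: CA0; exists y.
have [a [Ca Aa] amin] := woA _ (@subIsetr _ _ _) CA0.
pose D := C `&` [set y | lexlt y a].
have [D0|D0] := pselect (D !=set0); last first.
  exists a => // y Cy; case: (lexle_total a y) => // ya.
  by exfalso; apply: D0; exists y.
have DB : D `<=` B.
  move=> y [Cy ya]; case: (CAB _ Cy) => // Ay.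
  by exfalso; apply: lexlt_nle ya (amin _ _).
have [b [Cb ba] bmin] := woB D DB D0.
exists b => // y Cy; case: (lexle_total a y) => [ay|ya].
  by left; apply: lexlt_le_trans ba ay.
exact: bmin.
Qed.

Lemma wo_image_iota (f : nat -> mon) k : WO [set f j | j in [set j | (j < k)%N]].
Proof.
induction k as [|k IH].
  by refine (wo_sub _ (@wo_set1 0)) => x [j].
refine (wo_sub _ (wo_setU IH (@wo_set1 (f k)))) => x [j /= jk <-].
by move: jk; rewrite ltnS leq_eqVlt => /orP[/eqP->|jk]; [right | left; exists j].
Qed.

(* Every sequence in a well-ordered set has a nondecreasing subsequence:
   repeatedly jump to an index realising the minimum of the remaining tail. *)
Lemma wo_nondecreasing_subseq S x : WO S -> (forall n, S (x n)) ->
  exists s : nat -> nat, (forall k, (s k < s k.+1)%N) /\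
    forall k, lexle (x (s k)) (x (s k.+1)).
Proof.
move=> woS Sx.
have tail_min i : exists j, (i < j)%N /\ forall j', (i < j')%N -> lexle (x j) (x j').
  have [_ [j ij <-] jmin] : exists2 a, [set x j | j in [set j | (i < j)%N]] a &
      forall b, [set x j | j in [set j | (i < j)%N]] b -> lexle a b.
    apply: woS => [_ [j _ <-] //|].
    by exists (x i.+1), i.+1; rewrite /= ?ltnSn.
  exists j; split=> [|j' ij']; [exact: ij | by apply: jmin; exists j'].
have [next nextP] := choice tail_min.
exists (fun k => iter k.+1 next 0%N); split=> k /=.
  by case: (nextP (iter k.+1 next 0%N)).
case: (nextP (iter k next 0%N)) => lt1 le1; apply: le1.
by apply: ltn_trans lt1 _; case: (nextP (next (iter k next 0%N))).
Qed.

Definition sumset A B : set mon := [set a + b | a in A & b in B].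

(* Well-orderedness is stable under Minkowski sums: in a descending sequence
   a_n + b_n, pass to a subsequence where (a_n) is nondecreasing; then (b_n)
   descends. *)
Lemma wo_sumset A B : WO A -> WO B -> WO (sumset A B).
Proof.
move=> woA woB; apply/wellorderedP => x Sx dx.
have /choice [ab abP] : forall n, exists ab, [/\ A ab.1, B ab.2 & x n = ab.1 + ab.2].
  by move=> n; have [a Aa [b Bb <-]] := Sx n; exists (a, b).
have Aab n : A (ab n).1 by case: (abP n).
have [s [s_incr s_le]] := wo_nondecreasing_subseq woA Aab.
apply: (proj1 (wellorderedP B) woB (fun k => (ab (s k)).2)) => k.
  by case: (abP (s k)).
apply: lexlt_add_cancel (s_le k) _.
by case: (abP (s k)) (abP (s k.+1)) => _ _ <- [_ _ <-]; apply: descending_lt.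
Qed.

(* A monomial has finitely many decompositions m = a + t with a in A and t in
   T: infinitely many distinct a's would contain a strictly increasing
   subsequence, whose complements m - a would descend in T. *)
Lemma finite_decompositions A T m : WO A -> WO T ->
  finite_set [set a | A a /\ T (m - a)].
Proof.
move=> woA woT; apply: contrapT => /infinite_injseq [u uF uinj].
have Au n : A (u n) by case: (uF n).
have [s [s_incr s_le]] := wo_nondecreasing_subseq woA Au.
apply: (proj1 (wellorderedP T) woT (fun k => m - u (s k))) => [k|k].
  by case: (uF (s k)).
have u_lt : lexlt (u (s k)) (u (s k.+1)).
  case: (s_le k) => // /uinj eq_u.
  by have := s_incr k; rewrite eq_u ltnn.
by apply/lexlt_subr; rewrite opprB addrC addrA subrK -lexlt_subr.
Qed.

Lemma wo_ind A (Q : mon -> Prop) : WO A ->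
  (forall m, A m -> (forall a, A a -> lexlt a m -> Q a) -> Q m) ->
  forall m, A m -> Q m.
Proof.
move=> woA IH m Am; apply: contrapT => nQm.
have [a [Aa nQa] amin] := woA [set a | A a /\ ~ Q a] (fun a aP => proj1 aP)
  (ex_intro _ m (conj Am nQm)).
apply: nQa; apply: IH => // b Ab ba; apply: contrapT => nQb.
exact: lexlt_nle ba (amin b (conj Ab nQb)).
Qed.

End WellOrdered.

Section Neumann.
Variables (R : realType) (r : nat).
Local Notation mon := (mon R r).
Local Notation WO := (@lex_wellordered R r).
Implicit Types (P Q : set mon) (x y : mon).

(* The l-th coordinate of z^alpha l_1^{n_1} ... l_r^{n_r}: alpha for l = 0,
   n_l for 1 <= l <= r, and 0 beyond. *)
Definition coord (l : nat) x : R :=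
  if l is i.+1 then (if insub i is Some j then (x.2 ord0 j)%:~R else 0) else x.1.

Lemma coordD l : {morph coord l : x y / x + y}.
Proof.
move=> x y; case: l => [//|i] /=; case: (insub i) => [j|]; last by rewrite addr0.
by rewrite mxE intrD.
Qed.

Lemma coord0 l : coord l 0 = 0.
Proof. by case: l => [//|i] /=; case: (insub i) => [j|] //; rewrite mxE. Qed.

Lemma coord_sum l (s : seq mon) (p : pred mon) :
  coord l (\sum_(x <- s | p x) x) = \sum_(x <- s | p x) coord l x.
Proof. by apply: big_morph; [exact: coordD | exact: coord0]. Qed.

(* Monomials whose coordinates of index < l vanish: "level at least l".
   On them the lexicographic order is decided by the l-th coordinate. *)
Definition vanish_below (l : nat) x := forall k, (k < l)%N -> coord k x = 0.

Lemma vanish_below_lt l x y : vanish_below l x -> vanish_below l y ->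
  coord l x < coord l y -> lexlt x y.
Proof.
case: l => [|i] vx vy lt_l; first by left.
have x1 : x.1 = 0 by exact: (vx 0%N).
have y1 : y.1 = 0 by exact: (vy 0%N).
move: lt_l => /=; case: insubP => [j _ ej|]; last by rewrite ltxx.
rewrite ltr_int => lt_j; right; split; first by rewrite x1 y1.
exists j; split=> // k kj.
have lt_k : (k.+1 < i.+1)%N by rewrite ltnS -ej.
have := vx _ lt_k; have := vy _ lt_k; rewrite /= valK => vyk vxk.
by apply/eqP; rewrite -(eqr_int R) vxk vyk.
Qed.

Lemma vanish_below_le l x y : lexle x y -> vanish_below l x -> vanish_below l y ->
  coord l x <= coord l y.
Proof.
move=> le_xy vx vy; rewrite leNgt; apply/negP => /(vanish_below_lt vy vx).
by move/lexlt_nle.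
Qed.

Lemma vanish_belowS l x : vanish_below l.+1 x <-> vanish_below l x /\ coord l x = 0.
Proof.
split=> [v|[v vl] k]; first by split=> [k kl|]; apply: v => //; apply: ltnW.
by rewrite ltnS leq_eqVlt => /orP[/eqP->|/v].
Qed.

Lemma vanish_below_top x : vanish_below r.+1 x -> x = 0.
Proof.
case: x => [x1 x2] v; have -> : x1 = 0 by exact: (v 0%N).
congr pair; apply/rowP => j; rewrite mxE.
have := v (j : nat).+1; rewrite ltnS /= valK => /(_ (ltn_ord j)) /eqP.
by rewrite intr_eq0 => /eqP.
Qed.

Definition monoid_of P : set mon :=
  [set x | exists s : seq mon, (forall p, p \in s -> P p) /\ x = \sum_(p <- s) p].

Lemma monoid_of_sub P Q : P `<=` Q -> monoid_of P `<=` monoid_of Q.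
Proof. by move=> PQ _ [s [sP ->]]; exists s; split=> // p /sP /PQ. Qed.

Lemma monoid_of0 P : monoid_of P 0.
Proof. by exists [::]; rewrite big_nil. Qed.

Lemma monoid_ofD P x y : monoid_of P x -> monoid_of P y -> monoid_of P (x + y).
Proof.
move=> [s1 [s1P ->]] [s2 [s2P ->]]; exists (s1 ++ s2); rewrite big_cat.
by split=> // p; rewrite mem_cat => /orP[/s1P|/s2P].
Qed.

Lemma sub_monoid_of P : P `<=` monoid_of P.
Proof.
by move=> p Pp; exists [:: p]; rewrite big_seq1; split=> // q; rewrite inE => /eqP ->.
Qed.

Lemma monoid_of_ge0 P :
  P `<=` [set p | lexlt 0 p] -> monoid_of P `<=` [set x | lexle 0 x].
Proof.
move=> Ppos _ [s [sP ->]]; elim: s sP => [|a s IH] sP; first by rewrite big_nil; right.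
rewrite big_cons; apply: lexle_add0; first by left; apply/Ppos/sP; rewrite inE eqxx.
by apply: IH => p ps; apply: sP; rewrite inE ps orbT.
Qed.

Lemma monoid_of_vanish l P : P `<=` vanish_below l -> monoid_of P `<=` vanish_below l.
Proof.
move=> Pv _ [s [sP ->]] k kl; rewrite coord_sum big_seq big1 // => p /sP /Pv.
exact.
Qed.

Fixpoint sums_upto (k : nat) Q : set mon :=
  if k is k'.+1 then sumset ([set 0] `|` Q) (sums_upto k' Q) else [set 0].

Lemma wo_sums_upto k Q : WO Q -> WO (sums_upto k Q).
Proof.
move=> woQ; elim: k => [|k IH] /=; first exact: wo_set1.
by apply: wo_sumset IH; apply: wo_setU woQ; apply: wo_set1.
Qed.

Lemma sums_upto0 k Q : sums_upto k Q 0.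
Proof. by elim: k => //= k IH; exists 0; [left | exists 0; rewrite ?addr0]. Qed.

Lemma sums_upto_seq k Q (s : seq mon) : (forall p, p \in s -> Q p) ->
  (size s <= k)%N -> sums_upto k Q (\sum_(p <- s) p).
Proof.
elim: s k => [|a s IH] k sQ sk; first by rewrite big_nil; apply: sums_upto0.
case: k sk => // k sk; rewrite big_cons; exists a.
  by right; apply: sQ; rewrite inE eqxx.
by exists (\sum_(p <- s) p) => //; apply: IH => // p ps; apply: sQ; rewrite inE ps orbT.
Qed.

Lemma sum_ge_count (T : eqType) (s : seq T) (p : pred T) (F : T -> R) (t : R) :
  (forall i, i \in s -> p i -> t <= F i) ->
  (count p s)%:R * t <= \sum_(i <- s | p i) F i.
Proof.
move=> Ft; rewrite -sum1_count natr_sum mulr_suml.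
rewrite big_seq_cond [X in _ <= X]big_seq_cond.
by apply: ler_sum => i /andP[si pi]; rewrite mul1r; apply: Ft.
Qed.

Section NeumannStep.
Variables (P : set mon) (l : nat).
Hypothesis Ppos : P `<=` [set p | lexlt 0 p].
Hypothesis woP : WO P.

Let Pl := P `&` vanish_below l.
Let Pl_pos := Pl `&` [set p | 0 < coord l p].

Lemma level_coord_ge0 p : Pl p -> 0 <= coord l p.
Proof.
move=> [Pp vp]; rewrite -(coord0 l); apply: vanish_below_le vp => [|k _].
  by left; apply: Ppos.
exact: coord0.
Qed.

Lemma level_next p : Pl p -> ~~ (0 < coord l p) -> (P `&` vanish_below l.+1) p.
Proof.
move=> Plp np; have ge0 := level_coord_ge0 Plp; case: Plp => Pp vp.
split=> //; apply/vanish_belowS; split=> //.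
by apply/eqP; rewrite eq_le ge0 andbT leNgt.
Qed.

(* The positive l-th coordinates on P_l are bounded away from 0 by the
   l-th coordinate of the least element of level exactly l. *)
Lemma level_gap :
  exists2 theta : R, 0 < theta & forall p, Pl_pos p -> theta <= coord l p.
Proof.
have [[p0 Pp0]|empty] := pselect (Pl_pos !=set0); last first.
  by exists 1 => // p Pp; exfalso; apply: empty; exists p.
have [pm [[Ppm vpm] pm_pos] pmin] :
    exists2 pm, Pl_pos pm & forall p, Pl_pos p -> lexle pm p.
  by apply: woP; [move=> p [[]] | exists p0].
by exists (coord l pm) => // p Pp; apply: vanish_below_le (pmin p Pp) vpm Pp.1.2.
Qed.

Lemma level_split theta K x : 0 < theta ->
  (forall p, Pl_pos p -> theta <= coord l p) ->
  monoid_of Pl x -> coord l x < K%:R * theta ->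
  sumset (sums_upto K Pl_pos) (monoid_of (P `&` vanish_below l.+1)) x.
Proof.
move=> theta_gt0 gap [s [sP ->]] lt_K; pose pos p := 0 < coord l p.
rewrite (bigID pos) /=; exists (\sum_(p <- s | pos p) p).
  rewrite -big_filter; apply: sums_upto_seq.
    by move=> p; rewrite mem_filter => /andP[pp ps]; split=> //; apply: sP.
  rewrite size_filter; apply: ltnW; rewrite -(ltr_nat R) -(ltr_pM2r theta_gt0).
  apply: le_lt_trans lt_K; rewrite (bigID pos) coordD !coord_sum /=.
  rewrite [X in _ + X]big1_seq ?addr0.
    by apply: sum_ge_count => p ps pp; apply: gap; split=> //; apply: sP.
  by move=> p /andP[np ps]; have [_ /vanish_belowS []] := level_next (sP p ps) np.
exists (\sum_(p <- s | ~~ pos p) p) => //.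
exists [seq p <- s | ~~ pos p]; rewrite big_filter; split=> //.
by move=> p; rewrite mem_filter => /andP[np ps]; apply: level_next (sP _ ps) np.
Qed.

(* If level >= l+1 generates a well-ordered monoid, so does level >= l: a
   descending sequence in the latter has bounded l-th coordinates, hence lies
   in the well-ordered set sums_upto K Pl_pos + monoid_of (level >= l+1). *)
Lemma neumann_step :
  WO (monoid_of (P `&` vanish_below l.+1)) -> WO (monoid_of Pl).
Proof.
move=> woNext; apply/wellorderedP => c Mc dc.
have [theta theta_gt0 gap] := level_gap.
have vc n : vanish_below l (c n) by apply: monoid_of_vanish (Mc n) => p [].
have c_le n : coord l (c n) <= coord l (c 0%N).
  apply: vanish_below_le (vc n) (vc 0%N); case: n => [|n]; first by right.
  by left; apply: descending_lt dc _ _ (ltn0Sn n).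
have [K lt_K] : exists K : nat, coord l (c 0%N) < K%:R * theta.
  exists (Num.Def.archi_bound (`|coord l (c 0%N)| / theta)).
  rewrite -ltr_pdivrMr //; apply: le_lt_trans (archi_boundP _).
    by rewrite ler_wpM2r ?ler_norm // invr_ge0 ltW.
  by rewrite divr_ge0 // ltW.
have woPl_pos : WO Pl_pos by refine (wo_sub _ woP) => p [[]].
apply: (proj1 (wellorderedP _) (wo_sumset (@wo_sums_upto K _ woPl_pos) woNext) c _ dc).
by move=> n; apply: level_split (Mc n) (le_lt_trans (c_le n) lt_K).
Qed.

End NeumannStep.

(* By descending induction on l, using neumann_step,
   the elements of level >= l generate a well-ordered monoid; level r+1 is
   {0}. *)
Theorem neumann P : P `<=` [set p | lexlt 0 p] -> WO P -> WO (monoid_of P).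
Proof.
move=> Ppos woP.
have top : WO (monoid_of (P `&` vanish_below r.+1)).
  refine (wo_sub _ (wo_set1 (a := 0))) => _ [s [sP ->]]; apply: big1_seq => p /sP [_].
  exact: vanish_below_top.
have levels k l : (k + l)%N = r.+1 -> WO (monoid_of (P `&` vanish_below l)).
  elim: k l => [|k IH] l; first by rewrite add0n => ->.
  by rewrite addSnnS => /IH; apply: neumann_step.
refine (wo_sub _ (levels r.+1 0%N (addn0 _))).
by apply: monoid_of_sub => p Pp; split=> // k; rewrite ltn0.
Qed.

End Neumann.

Section SeriesSupport.
Variables (R : realType) (r : nat).
Local Notation mon := (mon R r).
Local Notation ser := (ser R r).
Implicit Types (f h : ser).

Lemma fsbig_neq0 (I : choiceType) (D : set I) (F : I -> R) :
  \sum_(i \in D) F i != 0 -> exists i, F i != 0.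
Proof.
apply: contraNP => allF0; apply/eqP/fsbig1 => i _.
by apply/eqP; apply: contra_notT allF0 => Fi; exists i.
Qed.

Lemma binr0 (a : R) : binr a 0 = 1.
Proof. by rewrite /binr big_ord0 fact0 div1r invr1. Qed.

Lemma ellmon_neq0 j : (j < r)%N -> @ellmon R r j != 0.
Proof.
move=> jr; apply/eqP => /(congr1 (fun x : mon => x.2 ord0 (Ordinal jr))).
by rewrite !mxE eqxx.
Qed.

Variable T : set mon.
Hypothesis T0 : T 0.
Hypothesis TD : forall x y, T x -> T y -> T (x + y).
Hypothesis Tge0 : forall x, T x -> lexle 0 x.

Lemma supp_one : lsupp (@Defs.one R r) `<=` T.
Proof.
by move=> m; rewrite /lsupp /Defs.one /=; have [->|] := eqVneq m 0; rewrite ?eqxx.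
Qed.

Lemma supp_mul f h : lsupp f `<=` T -> lsupp h `<=` T -> lsupp (Defs.mul f h) `<=` T.
Proof.
move=> Tf Th m /fsbig_neq0 [y]; rewrite mulf_eq0 negb_or => /andP [fy hy].
by rewrite -(subrK y m) addrC; apply: TD; [apply: Tf | apply: Th].
Qed.

Lemma supp_pow f k : lsupp f `<=` T -> lsupp (pow f k) `<=` T.
Proof. by move=> Tf; elim: k => [|k IH] /=; [exact: supp_one | exact: supp_mul]. Qed.

Lemma supp_powser (c : nat -> R) f : lsupp f `<=` T -> lsupp (powser c f) `<=` T.
Proof.
move=> Tf m /fsbig_neq0 [k]; rewrite mulf_eq0 negb_or => /andP [_ pk].
exact: (supp_pow (k := k) Tf).
Qed.

Lemma T_antisym x : T x -> T (- x) -> x = 0.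
Proof.
move=> Tx /Tge0 /(lexle_addr x); rewrite add0r addNr => xle0.
exact: lexle_antisym xle0 (Tge0 Tx).
Qed.

Lemma mul_at0 f h : lsupp f `<=` T -> lsupp h `<=` T ->
  Defs.mul f h 0 = f 0 * h 0.
Proof.
move=> Tf Th; rewrite /Defs.mul -(fsbig_widen [set 0] setT) ?fsbig_set1 ?subr0 //.
move=> y [_ /= y_neq0]; apply/eqP; rewrite mulf_eq0.
have [//|fy] := eqVneq (f y) 0; apply/eqP; apply: contrapT => hy.
apply: y_neq0; apply: T_antisym; first exact: Tf.
by apply: Th; rewrite /lsupp /= -sub0r; apply/eqP.
Qed.

Lemma pow_at0 f k : lsupp f `<=` T -> f 0 = 0 -> pow f k 0 = (k == 0%N)%:R.
Proof.
move=> Tf f0; case: k => [|k] /=; first by rewrite /Defs.one eqxx.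
by rewrite mul_at0 ?f0 ?mul0r //; apply: supp_pow.
Qed.

Lemma powser_at0 (c : nat -> R) f : lsupp f `<=` T -> f 0 = 0 ->
  powser c f 0 = c 0%N.
Proof.
move=> Tf f0; rewrite /powser -(fsbig_widen [set 0%N] setT) // ?fsbig_set1.
  by rewrite pow_at0 // mulr1.
by move=> k [_ /= k_neq0]; rewrite pow_at0 //; case: eqP => // _; rewrite mulr0.
Qed.

Definition T_unit f := lsupp f `<=` T /\ f 0 = 1.

Lemma T_unit_one : T_unit (@Defs.one R r).
Proof. by split; [apply: supp_one | rewrite /Defs.one eqxx]. Qed.

Lemma T_unit_mul f h : T_unit f -> T_unit h -> T_unit (Defs.mul f h).
Proof.
move=> [Tf f1] [Th h1]; split; first exact: supp_mul.
by rewrite mul_at0 // f1 h1 mulr1.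
Qed.

Lemma T_unit_powser (c : nat -> R) f : lsupp f `<=` T -> f 0 = 0 -> c 0%N = 1 ->
  T_unit (powser c f).
Proof. by move=> Tf f0 c0; split; [apply: supp_powser | rewrite powser_at0]. Qed.

Section UnitFactor.
Variable phi : ser.
Hypothesis Teps : lsupp (eps phi) `<=` T.
Hypothesis Tell : forall j, T (@ellmon R r j).
Hypothesis phiz : phi (zmon R r) = 1.

Lemma supp_ell j : lsupp (@ell R r j) `<=` T.
Proof.
move=> m; rewrite /lsupp /ell /=.
by have [->|] := eqVneq m (@ellmon R r j); rewrite ?eqxx.
Qed.

Lemma supp_delta j : lsupp (delta phi j) `<=` T.
Proof.
elim: j => [|j IH] /=; first exact: Teps.
by apply/supp_powser/supp_mul; [apply: supp_ell | apply: supp_powser].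
Qed.

Lemma eps_at0 : eps phi 0 = 0.
Proof. by rewrite /eps add0r phiz /Defs.one eqxx subrr. Qed.

Lemma delta_at0 i : (i < r)%N -> delta phi i.+1 0 = 0.
Proof.
move=> ir; have Tlog : lsupp (powser (@logc R) (delta phi i)) `<=` T.
  exact/supp_powser/supp_delta.
rewrite /= powser_at0 //; first by apply: supp_mul => //; apply: supp_ell.
rewrite mul_at0 //; last exact: supp_ell.
by rewrite /ell eq_sym (negbTE (ellmon_neq0 ir)) mul0r.
Qed.

Lemma unitfac_unit m0 : T_unit (unitfac phi m0).
Proof.
apply: T_unit_mul; first exact: T_unit_powser Teps eps_at0 (binr0 _).
apply: (big_ind T_unit); [exact: T_unit_one | exact: T_unit_mul |].
move=> i _; apply: T_unit_powser (binr0 _); first exact: supp_delta.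
exact: delta_at0.
Qed.

End UnitFactor.

End SeriesSupport.

Section Composition.
Variables (R : realType) (r : nat).
Local Notation mon := (mon R r).
Local Notation ser := (ser R r).
Local Notation WO := (@lex_wellordered R r).

Lemma fsbig_cvg (I : choiceType) (D : set I) (F : nat -> I -> R) (L : I -> R) :
  finite_set D -> (forall i, D i -> (fun n => F n i) @ \oo --> L i) ->
  (fun n => \sum_(i \in D) F n i) @ \oo --> \sum_(i \in D) L i.
Proof.
move=> finD cvgF.
have seqE (G : I -> R) :
    \sum_(i \in D) G i = \sum_(i <- fset_set D | i \in fset_set D) G i.
  by rewrite fsbig_finite // big_seq.
rewrite seqE (_ : (fun n => _) =
    fun n => \sum_(i <- fset_set D | i \in fset_set D) F n i); last first.
  by apply/funext => n; apply: seqE.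
apply: cvg_big => [|i iD]; first exact: add_continuous.
by apply: cvgF; move: iD; rewrite in_fset_set // inE.
Qed.

Variables (T A : set mon) (phi : ser).
Hypothesis T0 : T 0.
Hypothesis TD : forall x y, T x -> T y -> T (x + y).
Hypothesis Tge0 : forall x, T x -> lexle 0 x.
Hypothesis woT : WO T.
Hypothesis woA : WO A.
Hypothesis Teps : lsupp (eps phi) `<=` T.
Hypothesis Tell : forall j, T (@ellmon R r j).
Hypothesis phiz : phi (zmon R r) = 1.

Let phi_unit := unitfac_unit T0 TD Tge0 Teps Tell phiz.

Let dec m := [set a | A a /\ T (m - a)].

Lemma compose_fsum (h : ser) m : lsupp h `<=` A ->
  compose h phi m = \sum_(a \in dec m) h a * unitfac phi a (m - a).
Proof.
move=> Ah; rewrite /compose -(fsbig_widen (dec m) setT) //.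
move=> a [_ /= not_dec]; rewrite /Defs.shift; apply/eqP; rewrite mulf_eq0.
have [//|ha] := eqVneq (h a) 0; apply/eqP; apply: contrapT => ua.
by apply: not_dec; split; [apply: Ah | apply: (phi_unit a).1; apply/eqP].
Qed.

Lemma coeff_from_compose (h : ser) m : lsupp h `<=` A ->
  h m = compose h phi m - \sum_(a \in dec m `\ m) h a * unitfac phi a (m - a).
Proof.
move=> Ah; rewrite compose_fsum //; have [Am|nAm] := pselect (A m).
  have dec_m : dec m m by split; rewrite ?subrr.
  rewrite (fsbigD1 m) //; last exact: finite_decompositions.
  by rewrite subrr (phi_unit m).2 mulr1 addrK.
have hm0 : h m = 0 by apply: contrapT => /eqP /Ah /nAm.
by rewrite hm0 not_setD1 ?subrr // => -[].
Qed.

Lemma dec_lt m a : (dec m `\ m) a -> A a /\ lexlt a m.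
Proof.
move=> [[Aa Ta] a_neq]; split=> //; apply/lexlt_subr.
case: (Tge0 Ta) => // ma0; exfalso; apply: a_neq.
by apply/esym/subr0_eq; rewrite ma0.
Qed.

Variables (g : nat -> ser) (g0 : ser).
Hypothesis gA : forall n, lsupp (g n) `<=` A.
Hypothesis g0A : lsupp g0 `<=` A.

Lemma compose_cvg :
  weak_cvg g g0 -> weak_cvg (fun n => compose (g n) phi) (compose g0 phi).
Proof.
move=> cvg_g m; rewrite compose_fsum //; under eq_cvg do rewrite compose_fsum //.
apply: fsbig_cvg => [|a _]; first exact: finite_decompositions.
by apply: cvgMr_tmp; apply: cvg_g.
Qed.

Lemma cvg_of_compose_cvg :
  weak_cvg (fun n => compose (g n) phi) (compose g0 phi) -> weak_cvg g g0.
Proof.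
move=> cvg_c.
have step m : (forall a, A a -> lexlt a m -> (fun n => g n a) @ \oo --> g0 a) ->
    (fun n => g n m) @ \oo --> g0 m.
  move=> IH; rewrite (coeff_from_compose m g0A).
  under eq_cvg => n do rewrite (coeff_from_compose m (@gA n)).
  apply: cvgB; first exact: cvg_c.
  apply: fsbig_cvg => [|a /dec_lt [Aa am]]; last by apply: cvgMr_tmp; apply: IH.
  exact/finite_setD/finite_decompositions.
have cvgA : forall a, A a -> (fun n => g n a) @ \oo --> g0 a.
  exact: (wo_ind woA (fun a _ => step a)).
by move=> m; apply: step => a Aa _; apply: cvgA.
Qed.

End Composition.

Section ExponentMonoid.
Variables (R : realType) (r : nat) (phi : ser R r).
Local Notation mon := (mon R r).
Hypothesis phiL0 : inL0 phi.

Lemma ellmon_pos j : (j < r)%N -> lexlt 0 (@ellmon R r j).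
Proof.
move=> jr; right; split => //; exists (Ordinal jr); split; last by rewrite !mxE eqxx.
by move=> k kj; rewrite !mxE /= ltn_eqF.
Qed.

Lemma ellmon_ge j : (r <= j)%N -> @ellmon R r j = 0.
Proof.
move=> rj; congr pair; apply/rowP => i; rewrite !mxE ltn_eqF //.
exact: leq_trans (ltn_ord i) rj.
Qed.

(* Generators of the exponent monoid of phi: the nonzero exponents of
   eps = phi/z - 1 and the exponents of l_1, ..., l_r. *)
Definition phi_gens : set mon :=
  [set m | lsupp phi (m + zmon R r) /\ m != 0] `|`
  [set @ellmon R r j | j in [set j | (j < r)%N]].

(* phi has leading monomial z, so all generators are positive. *)
Lemma phi_gens_pos : phi_gens `<=` [set p | lexlt 0 p].
Proof.
case: phiL0 => _ [_ zmin] m [[phim m_neq0]|[j jr <-]]; last exact: ellmon_pos.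
have := zmin _ phim; rewrite -{1}(add0r (zmon R r)) => /(lexle_addr (- zmon R r)).
by rewrite !addrK => -[//|m0]; rewrite -m0 eqxx in m_neq0.
Qed.

(* The generators are well-ordered: the first part is supp(phi) - z. *)
Lemma wo_phi_gens : lex_wellordered phi_gens.
Proof.
case: phiL0 => [[wophi _] _]; apply: wo_setU; last exact: wo_image_iota.
refine (wo_sub _ (wo_sumset wophi (wo_set1 (a := - zmon R r)))) => m [phim _].
by exists (m + zmon R r) => //; exists (- zmon R r) => //; rewrite addrK.
Qed.

Definition phi_monoid : set mon := monoid_of phi_gens.

Lemma supp_eps_phi_monoid : lsupp (eps phi) `<=` phi_monoid.
Proof.
move=> m; rewrite /lsupp /eps /Defs.one /=.
have [->|m_neq0] := eqVneq m 0; first by move=> _; apply: monoid_of0.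
by rewrite subr0 => phim; apply: sub_monoid_of; left.
Qed.

Lemma ellmon_phi_monoid j : phi_monoid (@ellmon R r j).
Proof.
have [jr|rj] := ltnP j r; first by apply: sub_monoid_of; right; exists j.
by rewrite ellmon_ge //; apply: monoid_of0.
Qed.

End ExponentMonoid.

(* Main theorem: with T the exponent monoid of phi (well-ordered by Neumann's
   lemma) and A = W u supp g0, both directions are instances of
   compose_cvg and cvg_of_compose_cvg. *)
Theorem lemma4p9 (R : realType) (r : nat) (W : set (mon R r))
    (g : nat -> ser R r) (g0 phi : ser R r) :
  W `<=` [set m | 0 <= m.1] ->
  lex_wellordered W ->
  (forall w, W w -> lexlt 0 w) ->
  (forall n, inL (g n)) ->
  (forall n, lsupp (g n) `<=` W) ->
  inL g0 ->
  inL0 phi ->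
  (weak_cvg g g0 <->
   weak_cvg (fun n => compose (g n) phi) (compose g0 phi)).
Proof.
move=> _ woW _ _ gW [woG0 _] phiL0.
have phiz : phi (zmon R r) = 1 by case: phiL0 => _ [].
have Tge0 := monoid_of_ge0 (phi_gens_pos phiL0).
have woT := neumann (phi_gens_pos phiL0) (wo_phi_gens phiL0).
have woA : lex_wellordered (W `|` lsupp g0) by apply: wo_setU.
have gA n : lsupp (g n) `<=` W `|` lsupp g0 by move=> m /gW; left.
have g0A : lsupp g0 `<=` W `|` lsupp g0 by move=> m; right.
have T0 := @monoid_of0 R r (phi_gens phi).
have TD := @monoid_ofD R r (phi_gens phi).
have Teps := @supp_eps_phi_monoid R r phi.
have Tell := @ellmon_phi_monoid R r phi.
split; first exact: (compose_cvg T0 TD Tge0 woT woA Teps Tell phiz gA g0A).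
exact: (cvg_of_compose_cvg T0 TD Tge0 woT woA Teps Tell phiz gA g0A).
Qed.
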